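(* Let $\mathcal M$ be a general model for CTT$_{\rm qe}$, let $\mathbf A_\alpha,\mathbf B_\alpha$ be expressions of the same type, and let $\mathbf C_o$ be a formula. Let $\mathbf C'_o$ be the result of replacing one occurrence of $\mathbf A_\alpha$ in $\mathbf C_o$ by an occurrence of $\mathbf B_\alpha$, where this occurrence of $\mathbf A_\alpha$ is not within a quotation, is not the bound-variable position $\mathbf x$ of an abstraction $\lambda\mathbf x.\mathbf D$, and is not the type-indicating second component $\mathbf E_\beta$ of an evaluation $[\![\mathbf D_\epsilon]\!]_{\mathbf E_\beta}$. If $\mathcal M\models\mathbf A_\alpha=\mathbf B_\alpha$ and $\mathcal M\models\mathbf C_o$, then $\mathcal M\models\mathbf C'_o$.
   Context: The logic CTT$_{\rm qe}$. Types: $\iota$ (individuals), $o$ (truth values), $\epsilon$ (constructions), and $(\alpha\to\beta)$ for types $\alpha,\beta$. Let $\mathcal V$ be a set of typed symbols (variables) containing denumerably many symbols $\mathbf{x}_\alpha$ of each type $\alpha$, and $\mathcal C$ a disjoint set of typed symbols (constants) containing the logical constants $=_{\alpha\to\alpha\to o}$ (each $\alpha$), $\mathsf{is\text{-}var}_{\epsilon\to o}$, $\mathsf{is\text{-}var}^\alpha_{\epsilon\to o}$, $\mathsf{is\text{-}con}_{\epsilon\to o}$, $\mathsf{is\text{-}con}^\alpha_{\epsilon\to o}$, $\mathsf{app}_{\epsilon\to\epsilon\to\epsilon}$, $\mathsf{abs}_{\epsilon\to\epsilon\to\epsilon}$, $\mathsf{quo}_{\epsilon\to\epsilon}$, $\mathsf{is\text{-}expr}_{\epsilon\to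 o}$, $\mathsf{is\text{-}expr}^\alpha_{\epsilon\to o}$ (each $\alpha$), $\sqsubset_{\epsilon\to\epsilon\to o}$, $\mathsf{is\text{-}free\text{-}in}_{\epsilon\to\epsilon\to o}$. Expressions $\mathbf{A}_\alpha$ (subscript = type) are defined inductively: (1) a variable $\mathbf{x}_\alpha$; (2) a constant $\mathbf{c}_\alpha$; (3) application $(\mathbf{F}_{\alpha\to\beta}\,\mathbf{A}_\alpha)$ of type $\beta$; (4) abstraction $(\lambda\mathbf{x}_\alpha.\mathbf{B}_\beta)$ of type $\alpha\to\beta$; (5) quotation $\ulcorner\mathbf{A}_\alpha\urcorner$ of type $\epsilon$, formed only if $\mathbf{A}_\alpha$ is eval-free; (6) evaluation $[\![\mathbf{A}_\epsilon]\!]_{\mathbf{B}_\beta}$ of type $\beta$, written $[\![\mathbf{A}_\epsilon]\!]_\beta$ (the second component only fixes the type). An expression is eval-free if built using rules (1)–(5) only. A formula is an expression of type $o$. In an eval-free expression, an occurrence of a variable $\mathbf{x}_\alpha$ is free if it is not inside a quotation and not inside a subexpression of the form $\lambda\mathbf{x}_\alpha.\mathbf{C}$; $\mathbf{x}_\alpha$ is free in $\mathbf{B}$ if it has a free occurrence there. Constructions: the smallest set of expressions of type $\epsilon$ containing all $\ulcorner\mathbf{x}_\alpha\urcorner$ and $\ulcorner\mathbf{c}_\alpha\urcorner$ and closed under forming $\mathsf{app}\,\mathbf{A}_\epsilon\,\mathbf{B}_\epsilon$, $\mathsf{abs}\,\mathbf{A}_\epsilon\,\mathbf{B}_\epsilon$,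 $\mathsf{quo}\,\mathbf{A}_\epsilon$. The injective map $\mathcal E$ from eval-free expressions to constructions: $\mathcal E(\mathbf{x}_\alpha)=\ulcorner\mathbf{x}_\alpha\urcorner$, $\mathcal E(\mathbf{c}_\alpha)=\ulcorner\mathbf{c}_\alpha\urcorner$, $\mathcal E(\mathbf{F}\,\mathbf{A})=\mathsf{app}\,\mathcal E(\mathbf F)\,\mathcal E(\mathbf A)$, $\mathcal E(\lambda\mathbf{x}_\alpha.\mathbf B)=\mathsf{abs}\,\mathcal E(\mathbf x_\alpha)\,\mathcal E(\mathbf B)$, $\mathcal E(\ulcorner\mathbf A\urcorner)=\mathsf{quo}\,\mathcal E(\mathbf A)$. Abbreviations: $\mathbf A_\alpha=\mathbf B_\alpha$ is $=_{\alpha\to\alpha\to o}\mathbf A_\alpha\mathbf B_\alpha$; $T_o$ is $(=_{o\to o\to o}\,=\,=_{o\to o\to o})$; $F_o$ is $(\lambda x_o.T_o)=(\lambda x_o.x_o)$; $\forall\mathbf x_\alpha.\mathbf A_o$ is $(\lambda\mathbf x_\alpha.T_o)=(\lambda\mathbf x_\alpha.\mathbf A_o)$; $\neg\mathbf A_o$ is $=_{o\to o\to o}F_o\,\mathbf A_o$; $\exists\mathbf x_\alpha.\mathbf A_o$ is $\neg\forall\mathbf x_\alpha.\neg\mathbf A_o$; $\mathbf A\neq\mathbf B$ is $\neg(\mathbf A=\mathbf B)$; $\mathsf{IS\text{-}EFFECTIVE\text{-}IN}(\mathbf x_\alpha,\mathbf B_\beta)$ is $\exists\mathbf y_\alpha.((\lambda\mathbf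 x_\alpha.\mathbf B_\beta)\,\mathbf y_\alpha\neq\mathbf B_\beta)$ for a variable $\mathbf y_\alpha$ distinct from $\mathbf x_\alpha$. Semantics. A frame is $\{D_\alpha\}$ with $D_\iota$ nonempty, $D_o=\{\mathrm T,\mathrm F\}$, $D_\epsilon$ the set of all constructions, and $D_{\alpha\to\beta}$ some set of total functions $D_\alpha\to D_\beta$. An interpretation $(\{D_\alpha\},I)$ has $I(\mathbf c_\alpha)\in D_\alpha$ for each constant, with: $I(=_{\alpha\to\alpha\to o})$ the (curried) identity relation on $D_\alpha$; $I(\mathsf{is\text{-}var})(A)=\mathrm T$ iff $A=\ulcorner\mathbf x_\beta\urcorner$ for some variable of some type; $I(\mathsf{is\text{-}var}^\alpha)(A)=\mathrm T$ iff $A=\ulcorner\mathbf x_\alpha\urcorner$ for some variable of type $\alpha$; likewise $\mathsf{is\text{-}con}$, $\mathsf{is\text{-}con}^\alpha$ with constants; $I(\mathsf{app})(A)(B)$, $I(\mathsf{abs})(A)(B)$, $I(\mathsf{quo})(A)$ are the constructions $\mathsf{app}\,A\,B$, $\mathsf{abs}\,A\,B$, $\mathsf{quo}\,A$; $I(\mathsf{is\text{-}expr})(A)=\mathrm T$ iff $A=\mathcal E(\mathbf B_\beta)$ for some eval-free $\mathbf B_\beta$ of some type; $I(\mathsf{is\text{-}expr}^\alpha)(A)=\mathrm T$ iff $A=\mathcal E(\mathbf B_\alpha)$ for some eval-free $\mathbf B_\alpha$; $I(\sqsubset)(A)(B)=\mathrm T$ iff $A$ is a proper subexpression of $B$; $I(\mathsf{is\text{-}free\text{-}in})(A)(B)=\mathrm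 T$ iff $A=\ulcorner\mathbf x_\alpha\urcorner$, $B=\mathcal E(\mathbf C_\beta)$ for some eval-free $\mathbf C_\beta$, and $\mathbf x_\alpha$ is free in $\mathbf C_\beta$. An assignment $\phi$ maps each $\mathbf x_\alpha\in\mathcal V$ into $D_\alpha$; $\phi[\mathbf x_\alpha\mapsto d]$ is the usual modification. A general model is an interpretation $\mathcal M$ for which there is a valuation $V^{\mathcal M}_\phi(\mathbf C_\gamma)\in D_\gamma$ (for all $\phi$ and all expressions) with: (V1) $V_\phi(\mathbf x_\alpha)=\phi(\mathbf x_\alpha)$; (V2) $V_\phi(\mathbf c_\alpha)=I(\mathbf c_\alpha)$; (V3) $V_\phi(\mathbf F\,\mathbf A)=V_\phi(\mathbf F)(V_\phi(\mathbf A))$; (V4) $V_\phi(\lambda\mathbf x_\alpha.\mathbf B_\beta)$ is the $f\in D_{\alpha\to\beta}$ with $f(d)=V_{\phi[\mathbf x_\alpha\mapsto d]}(\mathbf B_\beta)$; (V5) $V_\phi(\ulcorner\mathbf A_\alpha\urcorner)=\mathcal E(\mathbf A_\alpha)$; (V6) if $V_\phi(\mathsf{is\text{-}expr}^\beta\,\mathbf A_\epsilon)=\mathrm T$ then $V_\phi([\![\mathbf A_\epsilon]\!]_\beta)=V_\phi(\mathcal E^{-1}(V_\phi(\mathbf A_\epsilon)))$; (V7) for each $\beta$ there is a fixed $d_\beta\in D_\beta$ such that $V_\phi([\![\mathbf A_\epsilon]\!]_\beta)=d_\beta$ whenever $V_\phi(\mathsf{is\text{-}expr}^\beta\,\mathbf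 A_\epsilon)=\mathrm F$. $\mathcal M\models\mathbf A_o$ ($\mathbf A_o$ valid in $\mathcal M$) iff $V_\phi(\mathbf A_o)=\mathrm T$ for all $\phi$; $\models\mathbf A_o$ (valid in CTT$_{\rm qe}$) iff valid in every general model. A standard model is an interpretation in which every $D_{\alpha\to\beta}$ is the set of all total functions $D_\alpha\to D_\beta$. *)

From Stdlib Require Import Arith Relations.

Inductive ty : Type := TIota | TOmic | TEps | TFn (a b : ty).

Definition ty_eq_dec : forall a b : ty, {a = b} + {a <> b}.
Proof. decide equality. Defined.

Section CTT.
Variable U : Type.
Variable uty : U -> ty.

Inductive con : Type :=
| CEq (a : ty) | CIsVar | CIsVarT (a : ty) | CIsCon | CIsConT (a : ty)
| CApp | CAbs | CQuo | CIsExpr | CIsExprT (a : ty) | CSub | CIsFreeIn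
| CUser (u : U).

Definition cty (c : con) : ty :=
  match c with
  | CEq a => TFn a (TFn a TOmic)
  | CIsVar | CIsVarT _ | CIsCon | CIsConT _ | CIsExpr | CIsExprT _ => TFn TEps TOmic
  | CApp | CAbs => TFn TEps (TFn TEps TEps)
  | CQuo => TFn TEps TEps
  | CSub | CIsFreeIn => TFn TEps (TFn TEps TOmic)
  | CUser u => uty u
  end.

(* Raw syntax.  A variable x_a is (Var n a).  Eval e t is [[e]]_t. *)
Inductive expr : Type :=
| Var (n : nat) (a : ty)
| Con (c : con)
| App (f x : expr)
| Abs (n : nat) (a : ty) (body : expr)
| Quo (e : expr)
| Eval (e t : expr).

Fixpoint evalfree (e : expr) : Prop :=
  match e with
  | Var _ _ | Con _ => True
  | App f x => evalfree f /\ evalfree x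
  | Abs _ _ b => evalfree b
  | Quo e => evalfree e
  | Eval _ _ => False
  end.

Inductive wt : expr -> ty -> Prop :=
| wt_var n a : wt (Var n a) a
| wt_con c : wt (Con c) (cty c)
| wt_app f x a b : wt f (TFn a b) -> wt x a -> wt (App f x) b
| wt_abs n a b e : wt e b -> wt (Abs n a e) (TFn a b)
| wt_quo e a : wt e a -> evalfree e -> wt (Quo e) TEps
| wt_eval e t b : wt e TEps -> wt t b -> wt (Eval e t) b.

(* The map E (only meaningful on eval-free expressions; Eval case is junk). *)
Fixpoint enc (e : expr) : expr :=
  match e with
  | Var n a => Quo (Var n a)
  | Con c => Quo (Con c)
  | App f x => App (App (Con CApp) (enc f)) (enc x)
  | Abs n a b => App (App (Con CAbs) (Quo (Var n a))) (enc b)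
  | Quo e => App (Con CQuo) (enc e)
  | Eval e t => Eval e t
  end.

Fixpoint is_constr (e : expr) : bool :=
  match e with
  | Quo (Var _ _) | Quo (Con _) => true
  | App (App (Con CApp) a) b => is_constr a && is_constr b
  | App (App (Con CAbs) a) b => is_constr a && is_constr b
  | App (Con CQuo) a => is_constr a
  | _ => false
  end.

(* x_a free in e (for eval-free e) *)
Fixpoint free_in (n : nat) (a : ty) (e : expr) : Prop :=
  match e with
  | Var m b => m = n /\ b = a
  | Con _ => False
  | App f x => free_in n a f \/ free_in n a x
  | Abs m b body => ~ (m = n /\ b = a) /\ free_in n a body
  | Quo _ => False
  | Eval _ _ => False
  end.

Inductive imm_sub : expr -> expr -> Prop :=
| isub_app_l f x : imm_sub f (App f x)
| isub_app_r f x : imm_sub x (App f x)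
| isub_abs_v n a b : imm_sub (Var n a) (Abs n a b)
| isub_abs_b n a b : imm_sub b (Abs n a b)
| isub_quo e : imm_sub e (Quo e)
| isub_eval_l e t : imm_sub e (Eval e t)
| isub_eval_r e t : imm_sub t (Eval e t).

Definition proper_sub : expr -> expr -> Prop := clos_trans expr imm_sub.

Inductive repl1 (A B : expr) : expr -> expr -> Prop :=
| r_here : repl1 A B A B
| r_app_l f f' x : repl1 A B f f' -> repl1 A B (App f x) (App f' x)
| r_app_r f x x' : repl1 A B x x' -> repl1 A B (App f x) (App f x')
| r_abs n a b b' : repl1 A B b b' -> repl1 A B (Abs n a b) (Abs n a b')
| r_eval e e' t : repl1 A B e e' -> repl1 A B (Eval e t) (Eval e' t).

Definition eq_expr (a : ty) (X Y : expr) : expr := App (App (Con (CEq a)) X) Y.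

Record frame_base : Type := { Diota : Type; Dfun : ty -> ty -> Type }.

Definition Dom (F : frame_base) (t : ty) : Type :=
  match t with
  | TIota => Diota F
  | TOmic => bool                       (* true = T, false = F *)
  | TEps => {e : expr | is_constr e = true}
  | TFn a b => Dfun F a b
  end.

(* D_{a->b} is a set of total functions D_a -> D_b: represented by a type
   with an (extensionally) injective application map. *)
Record frame : Type := {
  fbase :> frame_base;
  Diota_inh : inhabited (Diota fbase);
  fapp : forall a b, Dfun fbase a b -> Dom fbase a -> Dom fbase b;
  fapp_ext : forall a b f g, (forall x, fapp a b f x = fapp a b g x) -> f = g
}.

Definition ap {F : frame} {a b : ty} (f : Dom F (TFn a b)) (x : Dom F a) : Dom F b :=
  fapp F a b f x.

Definition cval {F : frame} (A : Dom F TEps) : expr := proj1_sig A.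

Definition is_interp (F : frame) (I : forall c, Dom F (cty c)) : Prop :=
  (forall a (x y : Dom F a), @ap F a _ (@ap F a _ (I (CEq a)) x) y = true <-> x = y) /\
  (forall A : Dom F TEps, @ap F TEps TOmic (I CIsVar) A = true <->
       exists n b, cval A = Quo (Var n b)) /\
  (forall a (A : Dom F TEps), @ap F TEps TOmic (I (CIsVarT a)) A = true <->
       exists n, cval A = Quo (Var n a)) /\
  (forall A : Dom F TEps, @ap F TEps TOmic (I CIsCon) A = true <->
       exists c, cval A = Quo (Con c)) /\
  (forall a (A : Dom F TEps), @ap F TEps TOmic (I (CIsConT a)) A = true <->
       exists c, cty c = a /\ cval A = Quo (Con c)) /\
  (forall A B : Dom F TEps,
       cval (@ap F TEps TEps (@ap F TEps (TFn TEps TEps) (I CApp) A) B)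
       = App (App (Con CApp) (cval A)) (cval B)) /\
  (forall A B : Dom F TEps,
       cval (@ap F TEps TEps (@ap F TEps (TFn TEps TEps) (I CAbs) A) B)
       = App (App (Con CAbs) (cval A)) (cval B)) /\
  (forall A : Dom F TEps,
       cval (@ap F TEps TEps (I CQuo) A) = App (Con CQuo) (cval A)) /\
  (forall A : Dom F TEps, @ap F TEps TOmic (I CIsExpr) A = true <->
       exists b e, evalfree e /\ wt e b /\ cval A = enc e) /\
  (forall a (A : Dom F TEps), @ap F TEps TOmic (I (CIsExprT a)) A = true <->
       exists e, evalfree e /\ wt e a /\ cval A = enc e) /\
  (forall A B : Dom F TEps,
       @ap F TEps TOmic (@ap F TEps (TFn TEps TOmic) (I CSub) A) B = true <->
       proper_sub (cval A) (cval B)) /\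
  (forall A B : Dom F TEps,
       @ap F TEps TOmic (@ap F TEps (TFn TEps TOmic) (I CIsFreeIn) A) B = true <->
       exists n a b e, cval A = Quo (Var n a) /\ evalfree e /\ wt e b /\
                       cval B = enc e /\ free_in n a e).

Definition asg (F : frame) : Type := forall (n : nat) (a : ty), Dom F a.

Definition upd {F : frame} (phi : asg F) (n : nat) (a : ty) (d : Dom F a) : asg F :=
  fun m b =>
    match Nat.eq_dec m n, ty_eq_dec a b with
    | left _, left e => eq_rect a (Dom F) d b e
    | _, _ => phi m b
    end.

Definition is_valuation (F : frame) (I : forall c, Dom F (cty c))
    (V : asg F -> forall t : ty, expr -> Dom F t) : Prop :=
  (forall phi n a, V phi a (Var n a) = phi n a) /\
  (forall phi c, V phi (cty c) (Con c) = I c) /\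
  (forall phi f x a b, wt f (TFn a b) -> wt x a ->
              V phi b (App f x) = @ap F a b (V phi (TFn a b) f) (V phi a x)) /\
  (forall phi n a b e, wt e b -> forall d : Dom F a,
              @ap F a b (V phi (TFn a b) (Abs n a e)) d = V (upd phi n a d) b e) /\
  (forall phi e a, wt e a -> evalfree e ->
              cval (V phi TEps (Quo e)) = enc e) /\
  (forall phi e t b, wt e TEps -> wt t b ->
              V phi TOmic (App (Con (CIsExprT b)) e) = true ->
              forall e', evalfree e' -> wt e' b -> enc e' = cval (V phi TEps e) ->
              V phi b (Eval e t) = V phi b e') /\
  (exists d : forall b, Dom F b, forall phi e t b, wt e TEps -> wt t b ->
              V phi TOmic (App (Con (CIsExprT b)) e) = false ->
              V phi b (Eval e t) = d b).

Record gmodel : Type := {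
  gm_frame : frame;
  gm_I : forall c, Dom gm_frame (cty c);
  gm_I_ok : is_interp gm_frame gm_I;
  gm_V : asg gm_frame -> forall t : ty, expr -> Dom gm_frame t;
  gm_V_ok : is_valuation gm_frame gm_I gm_V
}.

Definition valid (M : gmodel) (e : expr) : Prop :=
  forall phi : asg (gm_frame M), gm_V M phi TOmic e = true.

End CTT.

Arguments Var {U}. Arguments Con {U}. Arguments App {U}. Arguments Abs {U}.
Arguments Quo {U}. Arguments Eval {U}.
Arguments wt {U} uty. Arguments repl1 {U}. Arguments eq_expr {U}.
Arguments valid {U uty}. Arguments gmodel {U} uty.

(* Every occurrence that may be replaced sits in a position whose value is
   computed compositionally from the values of its immediate subexpressions
   (V3, V4, and V6/V7, where evaluation depends on its first component only
   through its value).  So, by induction on the replacement, C and C' have the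
   same value under every assignment once A and B do, and M |= A = B says
   exactly that. *)

Section Typing.
Variables (U : Type) (uty : U -> ty).

Lemma wt_unique (e : expr U) a : wt uty e a -> forall b, wt uty e b -> a = b.
Proof.
  induction 1 as [| | f x a b _ IHf | n a b e _ IHe | |]; intros b' Hb';
    inversion Hb' as [| | f' x' a' b'' Hf' | n' a' b'' e' He' | |]; subst; auto.
  - specialize (IHf _ Hf'). congruence.
  - f_equal; auto.
Qed.

Lemma repl1_wt (A B : expr U) a :
  wt uty A a -> wt uty B a ->
  forall D D', repl1 A B D D' -> forall t, wt uty D t -> wt uty D' t.
Proof.
  intros HA HB D D' R; induction R; intros s Hs.
  1: { rewrite (wt_unique _ _ Hs a HA). exact HB. }
  all: inversion Hs; subst; econstructor; eauto.
Qed.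

End Typing.

Section Valuation.
Variables (U : Type) (uty : U -> ty) (M : gmodel uty).

Local Notation F := (gm_frame _ _ M).
Local Notation V := (gm_V _ _ M).

Lemma V_eq_expr (phi : asg U F) a (A B : expr U) :
  wt uty A a -> wt uty B a ->
  V phi TOmic (eq_expr a A B) = true -> V phi a A = V phi a B.
Proof.
  intros HA HB Heq.
  destruct (gm_V_ok _ _ M) as (_ & V2 & V3 & _).
  destruct (gm_I_ok _ _ M) as (Ieq & _).
  assert (Hc : wt uty (Con (CEq U a)) (TFn a (TFn a TOmic))) by exact (wt_con _ uty _).
  unfold eq_expr in Heq.
  rewrite (V3 phi _ B a TOmic), (V3 phi _ A a (TFn a TOmic)) in Heq
    by eauto using wt_app.
  pose proof (V2 phi (CEq U a)) as HI; simpl in HI.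
  rewrite HI in Heq.
  exact (proj1 (Ieq a _ _) Heq).
Qed.

Lemma V_is_exprT (phi : asg U F) b (e : expr U) :
  wt uty e TEps ->
  V phi TOmic (App (Con (CIsExprT U b)) e)
  = @ap U F TEps TOmic (gm_I _ _ M (CIsExprT U b)) (V phi TEps e).
Proof.
  intros He.
  destruct (gm_V_ok _ _ M) as (_ & V2 & V3 & _).
  rewrite (V3 phi _ e TEps TOmic) by (auto; exact (wt_con _ uty (CIsExprT U b))).
  pose proof (V2 phi (CIsExprT U b)) as HI; simpl in HI.
  rewrite HI. reflexivity.
Qed.

Lemma V_eval_congr (phi : asg U F) b (e e' t : expr U) :
  wt uty e TEps -> wt uty e' TEps -> wt uty t b ->
  V phi TEps e = V phi TEps e' -> V phi b (Eval e t) = V phi b (Eval e' t).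
Proof.
  intros He He' Ht Hee'.
  destruct (gm_V_ok _ _ M) as (_ & _ & _ & _ & _ & V6 & d & V7).
  destruct (gm_I_ok _ _ M) as (_ & _ & _ & _ & _ & _ & _ & _ & _ & IexT & _).
  pose proof (V_is_exprT phi b e He) as Hx.
  pose proof (V_is_exprT phi b e' He') as Hx'.
  rewrite <- Hee' in Hx'.
  destruct (@ap U F TEps TOmic (gm_I _ _ M (CIsExprT U b)) (V phi TEps e)) eqn:Hb.
  - destruct (proj1 (IexT b _) Hb) as (e0 & Hf & Hw & Hq).
    rewrite (V6 phi e t b He Ht Hx e0 Hf Hw (eq_sym Hq)).
    rewrite Hee' in Hq.
    rewrite (V6 phi e' t b He' Ht Hx' e0 Hf Hw (eq_sym Hq)).
    reflexivity.
  - rewrite (V7 phi e t b He Ht Hx), (V7 phi e' t b He' Ht Hx'). reflexivity.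
Qed.

Lemma V_app_congr (phi : asg U F) a b (f f' x x' : expr U) :
  wt uty f (TFn a b) -> wt uty f' (TFn a b) -> wt uty x a -> wt uty x' a ->
  V phi (TFn a b) f = V phi (TFn a b) f' -> V phi a x = V phi a x' ->
  V phi b (App f x) = V phi b (App f' x').
Proof.
  intros Hf Hf' Hx Hx' Hff' Hxx'.
  destruct (gm_V_ok _ _ M) as (_ & _ & V3 & _).
  rewrite (V3 phi f x a b), (V3 phi f' x' a b) by assumption.
  congruence.
Qed.

Lemma V_abs_congr (phi : asg U F) n a b (e e' : expr U) :
  wt uty e b -> wt uty e' b ->
  (forall d : Dom U F a, V (upd U phi n a d) b e = V (upd U phi n a d) b e') ->
  V phi (TFn a b) (Abs n a e) = V phi (TFn a b) (Abs n a e').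
Proof.
  intros He He' Hee'.
  destruct (gm_V_ok _ _ M) as (_ & _ & _ & V4 & _).
  apply (fapp_ext U F). intro d.
  change (@ap U F a b (V phi (TFn a b) (Abs n a e)) d =
          @ap U F a b (V phi (TFn a b) (Abs n a e')) d).
  rewrite (V4 phi n a b e He), (V4 phi n a b e' He').
  apply Hee'.
Qed.

Lemma V_repl1 (A B : expr U) a :
  wt uty A a -> wt uty B a ->
  (forall phi, V phi a A = V phi a B) ->
  forall D D', repl1 A B D D' ->
  forall s, wt uty D s -> forall phi, V phi s D = V phi s D'.
Proof.
  intros HA HB HAB D D' R; induction R; intros s Hs phi.
  1: { rewrite (wt_unique _ _ _ _ Hs a HA). apply HAB. }
  all: inversion Hs; subst.
  - apply V_app_congr with (a := a0); eauto using repl1_wt.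
  - apply V_app_congr with (a := a0); eauto using repl1_wt.
  - apply V_abs_congr; eauto using repl1_wt.
  - apply V_eval_congr; eauto using repl1_wt.
Qed.

End Valuation.

Theorem mainTheorem12 (U : Type) (uty : U -> ty) (M : gmodel uty)
    (a : ty) (A B C C' : expr U) :
  wt uty A a -> wt uty B a -> wt uty C TOmic ->
  repl1 A B C C' ->
  valid M (eq_expr a A B) -> valid M C -> valid M C'.
Proof.
  intros HA HB HC R HAB HCv phi.
  assert (HV : forall psi, gm_V _ _ M psi a A = gm_V _ _ M psi a B).
  { intro psi. exact (V_eq_expr _ _ M psi a A B HA HB (HAB psi)). }
  rewrite <- (V_repl1 _ _ M A B a HA HB HV C C' R TOmic HC phi).
  apply HCv.
Qed.
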